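(* Let $T_1\subseteq\mathbb{R}^3$ be the closed triangle with vertices $(0,0,0),(0,-1,0),(-1,-1,0)$ and $T_2$ the closed triangle with vertices $(0,0,0),(-1,-1,0),(-1,-1,-1)$. Let $Y=T_1\cup T_2$ with the relative Euclidean topology $\tau$ and the coordinatewise partial order $\preceq$. Then: (i) $(Y,\tau,\preceq)$ is a locally compact, order-connected partially ordered topological space and $(Y,\preceq)$ is a lattice; (ii) the meet operation $\wedge:Y\times Y\to Y$ is not continuous at $((0,0,0),(0,-1,0))$, so $(Y,\tau,\preceq)$ is not a topological $\wedge$-semilattice; (iii) the canonical map $y\mapsto y^\downarrow$ from $(Y,\tau)$ to $(C^\downarrow(Y),\tau_F)$ is not continuous at $(0,0,0)$.
   Context: A partially ordered topological space is a topological space with a partial order whose graph is closed in the product. $y^\downarrow=\{u\in Y:u\preceq y\}$, $y^\uparrow=\{u\in Y:y\preceq u\}$. Order-connected: $x^\uparrow\cap y^\downarrow$ is connected whenever $x\preceq y$. A topological $\wedge$-semilattice is a partially ordered topological space in which every two elements have an infimum and $\wedge$ is continuous. $C(Y)$ = closed subsets of $Y$, $C^\downarrow(Y)=\{y^\downarrow:y\in Y\}$ with the relative Fell topology; the Fell topology $\tau_F$ is generated by the sets $\{A:A\cap O\neq\emptyset\}$ ($O$ open) and $\{A:A\cap D=\emptyset\}$ ($D$ compact). *)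

From HB Require Import structures.
From mathcomp Require Import all_boot all_order all_algebra.
From mathcomp Require Import all_classical all_reals all_analysis.
Set Implicit Arguments. Unset Strict Implicit. Unset Printing Implicit Defensive.
Import Order.TTheory GRing.Theory Num.Theory.
Import numFieldNormedType.Exports.
Local Open Scope classical_set_scope.
Local Open Scope ring_scope.

Section Generic.
Context {X : topologicalType} (le : X -> X -> Prop).

Definition is_partial_order :=
  [/\ forall x, le x x,
      forall x y, le x y -> le y x -> x = y &
      forall x y z, le x y -> le y z -> le x z].

Definition pots := is_partial_order /\ closed [set p : X * X | le p.1 p.2].

Definition po_up (x : X) := [set u | le x u].
Definition po_down (y : X) := [set u | le u y].

Definition order_connected :=
  forall x y, le x y -> connected (po_up x `&` po_down y).

Definition po_inf (x y m : X) :=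
  [/\ le m x, le m y & forall z, le z x -> le z y -> le z m].
Definition po_sup (x y s : X) :=
  [/\ le x s, le y s & forall z, le x z -> le y z -> le s z].

Definition is_lattice :=
  forall x y, (exists m, po_inf x y m) /\ (exists s, po_sup x y s).

Definition top_meet_semilattice :=
  pots /\ exists m : X -> X -> X,
    (forall x y, po_inf x y (m x y)) /\ continuous (fun p : X * X => m p.1 p.2).
End Generic.

(* [fell X] is [set X] equipped with the topology generated by the subbase
   {A | A meets O} (O open) and {A | A misses D} (D compact). *)
Definition fell (X : Type) : Type := set X.
HB.instance Definition _ (X : Type) := Choice.on (fell X).

Section FellTop.
Context {X : topologicalType}.
Definition fell_index : pointedType := (set X * bool)%type.
Definition fell_D : set fell_index :=
  fun i => if i.2 then open i.1 else compact i.1.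
Definition fell_b (i : fell_index) : set (fell X) :=
  if i.2 then [set A : fell X | A `&` i.1 !=set0]
  else [set A : fell X | A `&` i.1 = set0].
HB.instance Definition _ :=
  @isSubBaseTopological.Build (fell X) fell_index fell_D fell_b.
End FellTop.

Section Concrete.
Context {R : realType}.
Local Notation pt3 := (R * R * R)%type.
Definition mkpt (a b c : R) : pt3 := (a, b, c).

Definition triangle (u v w : pt3) : set pt3 :=
  [set p | exists a b c : R, [/\ 0 <= a, 0 <= b, 0 <= c, a + b + c = 1 &
     p = mkpt (a * u.1.1 + b * v.1.1 + c * w.1.1)
              (a * u.1.2 + b * v.1.2 + c * w.1.2)
              (a * u.2 + b * v.2 + c * w.2)]].

Definition T1 : set pt3 := triangle (mkpt 0 0 0) (mkpt 0 (-1) 0) (mkpt (-1) (-1) 0).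
Definition T2 : set pt3 := triangle (mkpt 0 0 0) (mkpt (-1) (-1) 0) (mkpt (-1) (-1) (-1)).
Definition Yset : set pt3 := T1 `|` T2.

Definition Ysp : Type := set_type Yset.
HB.instance Definition _ := Topological.copy Ysp (set_type Yset).

Definition le3 (p q : pt3) : Prop := [/\ p.1.1 <= q.1.1, p.1.2 <= q.1.2 & p.2 <= q.2].
Definition leY (x y : Ysp) : Prop := le3 (val x) (val y).
End Concrete.

(* Y is the set of points with -1 <= y <= x <= z <= 0 and either z = 0 (this
   is T1) or x = y (this is T2).  A continuous retraction of R^3 onto Y makes Y
   compact and provides the paths used below.
   An order interval of Y is the union of its traces on T1 and T2.  Both are
   convex, and when both are nonempty they share the point (p1, p1, 0) of the
   common edge, p being any point of the trace on T2; so the interval is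
   connected.
   The point a = o /\ a lies in o^↓ and in the open set {y < x}, whereas
   everything below a point (-t, -t, -t) of T2 \ T1 lies on the diagonal x = y.
   Letting t tend to 0 shows that neither the meet nor y |-> y^↓ is
   continuous at o. *)

From HB Require Import structures.
From mathcomp Require Import all_boot all_order all_algebra.
From mathcomp Require Import all_classical all_reals all_analysis.
From mathcomp Require Import ring lra finmap.
Import Order.TTheory GRing.Theory Num.Theory.
Import numFieldNormedType.Exports.
Local Open Scope classical_set_scope.
Local Open Scope ring_scope.

Section RealContinuity.
Context {R : realType} {T : topologicalType}.
Implicit Types f g : T -> R.

Lemma continuous_add f g : continuous f -> continuous g ->
  continuous (fun t => f t + g t).
Proof. by move=> cf cg x; apply: (continuousD (cf x) (cg x)). Qed.

Lemma continuous_opp f : continuous f -> continuous (fun t => - f t).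
Proof. by move=> cf x; apply: (continuousN (cf x)). Qed.

Lemma continuous_mul f g : continuous f -> continuous g ->
  continuous (fun t => f t * g t).
Proof. by move=> cf cg x; apply: (continuousM (cf x) (cg x)). Qed.

Lemma continuous_minr f g : continuous f -> continuous g ->
  continuous (fun t => Num.min (f t) (g t)).
Proof. by move=> cf cg x; apply: (continuous_min (cf x) (cg x)). Qed.

Lemma continuous_maxr f g : continuous f -> continuous g ->
  continuous (fun t => Num.max (f t) (g t)).
Proof. by move=> cf cg x; apply: (continuous_max (cf x) (cg x)). Qed.

Lemma closed_le_continuous f g : continuous f -> continuous g ->
  closed [set t | f t <= g t].
Proof.
move=> cf cg; have -> : [set t | f t <= g t] = (fun t => g t - f t) @^-1` [set x | 0 <= x].
  by apply/seteqP; split => t /=; rewrite subr_ge0.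
apply: (proj1 (continuous_closedP _)); last exact: closed_ge.
by apply: continuous_add => //; apply: continuous_opp.
Qed.

Lemma open_lt_continuous f g : continuous f -> continuous g ->
  open [set t | f t < g t].
Proof.
move=> cf cg; have -> : [set t | f t < g t] = (fun t => g t - f t) @^-1` [set x | 0 < x].
  by apply/seteqP; split => t /=; rewrite subr_gt0.
apply: open_comp; last exact: open_gt.
by move=> t _; apply: continuous_add => //; apply: continuous_opp.
Qed.
End RealContinuity.

Section Clamp.
Context {R : realType}.

Definition clamp (a b t : R) : R := Num.max a (Num.min t b).

Lemma clamp_ge a b t : a <= clamp a b t.
Proof. by rewrite /clamp le_max lexx. Qed.

Lemma clamp_le a b t : a <= b -> clamp a b t <= b.
Proof. by move=> ab; rewrite /clamp ge_max ab ge_min lexx orbT. Qed.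

Lemma clamp_id a b t : a <= t -> t <= b -> clamp a b t = t.
Proof. by move=> ha hb; rewrite /clamp (min_l hb) (max_r ha). Qed.

Lemma continuous_clamp {T : topologicalType} (a b f : T -> R) :
  continuous a -> continuous b -> continuous f ->
  continuous (fun t => clamp (a t) (b t) (f t)).
Proof. by move=> ca cb cf; apply: continuous_maxr => //; apply: continuous_minr. Qed.
End Clamp.

Lemma nbhs0_pos_witness {R : realType} (U : set R) :
  nbhs (0 : R) U -> exists t : R, 0 < t <= 1 /\ U t.
Proof.
move=> /nbhs_ballP [e /= e0 eU]; exists (Num.min (e / 2) 1).
have m1 : Num.min (e / 2) 1 <= e / 2 by rewrite ge_min lexx.
have m2 : Num.min (e / 2) 1 <= 1 by rewrite ge_min lexx orbT.
have m0 : 0 < Num.min (e / 2) 1 by rewrite lt_min ltr01 andbT; lra.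
split; first by apply/andP.
by apply: eU; rewrite /ball /= sub0r normrN ger0_norm; lra.
Qed.

Section Y.
Context {R : realType}.
Local Notation pt3 := (R * R * R)%type.
Implicit Types (p q r : pt3) (l : R).

Lemma continuous_coord1 : continuous (fun q : pt3 => q.1.1).
Proof. by move=> q; apply: (@continuous_comp _ _ _ fst fst); [exact: cvg_fst|exact: cvg_fst]. Qed.

Lemma continuous_coord2 : continuous (fun q : pt3 => q.1.2).
Proof. by move=> q; apply: (@continuous_comp _ _ _ fst snd); [exact: cvg_fst|exact: cvg_snd]. Qed.

Lemma continuous_coord3 : continuous (fun q : pt3 => q.2).
Proof. by move=> q; exact: cvg_snd. Qed.

Lemma continuous_mkpt {T : topologicalType} (f g h : T -> R) :
  continuous f -> continuous g -> continuous h ->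
  continuous (fun t => mkpt (f t) (g t) (h t)).
Proof.
by move=> cf cg ch x; apply: (cvg_pair (cvg_pair (cf x) (cg x)) (ch x)).
Qed.

Lemma T1E p : T1 p <-> [/\ p.2 = 0, -1 <= p.1.2, p.1.2 <= p.1.1 & p.1.1 <= 0].
Proof.
case: p => [[x y] z]; split.
  by case=> a [b [c [a0 b0 c0 abc [-> -> ->]]]] /=; split; lra.
case=> /= -> *; exists (1 + y), (x - y), (- x).
by split; [lra|lra|lra|lra|]; rewrite /mkpt /=; congr (_, _, _); lra.
Qed.

Lemma T2E p : T2 p <-> [/\ p.1.1 = p.1.2, -1 <= p.1.1, p.1.1 <= p.2 & p.2 <= 0].
Proof.
case: p => [[x y] z]; split.
  by case=> a [b [c [a0 b0 c0 abc [-> -> ->]]]] /=; split; lra.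
case=> /= <- *; exists (1 + x), (z - x), (- z).
by split; [lra|lra|lra|lra|]; rewrite /mkpt /=; congr (_, _, _); lra.
Qed.

Definition Yspec p := [/\ -1 <= p.1.2, p.1.2 <= p.1.1, p.1.1 <= p.2, p.2 <= 0
  & p.2 = 0 \/ p.1.1 = p.1.2].

Lemma YsetE p : Yset p <-> Yspec p.
Proof.
split.
  by case=> [/T1E [z0 *]|/T2E [xy *]]; split; by [lra|left|right].
by case=> ? ? ? ? [?|?]; [left; apply/T1E|right; apply/T2E]; split; lra.
Qed.

(* Clamp onto the simplex -1 <= y <= x <= z <= 0, then push y up and z up by the
   same amount until one of the two defining equations of Y holds. *)
Definition retr q : pt3 :=
  let x := clamp (-1) 0 q.1.1 in
  let y := clamp (-1) x q.1.2 in
  let z := clamp x 0 q.2 in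
  let m := Num.min (x - y) (- z) in
  mkpt x (y + m) (z + m).

Lemma retr_Yspec q : Yspec (retr q).
Proof.
rewrite /retr /Yspec /=.
set x := clamp _ _ q.1.1; set y := clamp _ _ q.1.2; set z := clamp _ _ q.2.
have x1 : -1 <= x by apply: clamp_ge.
have x0 : x <= 0 by apply: clamp_le; lra.
have y1 : -1 <= y by apply: clamp_ge.
have yx : y <= x by apply: clamp_le.
have xz : x <= z by apply: clamp_ge.
have z0 : z <= 0 by apply: clamp_le.
rewrite minEle; case: (leP (x - y) (- z)) => h; split; by [lra|right; lra|left; lra].
Qed.

Lemma retr_id q : Yspec q -> retr q = q.
Proof.
case: q => [[x y] z] [/= y1 yx xz z0 zxy].
rewrite /retr; cbn [fst snd].
have -> : clamp (-1) 0 x = x by apply: clamp_id; lra.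
have -> : clamp (-1) x y = y by apply: clamp_id.
have -> : clamp x 0 z = z by apply: clamp_id.
have -> : Num.min (x - y) (- z) = 0.
  by rewrite minEle; case: (leP (x - y) (- z)); case: zxy => ->; lra.
by rewrite !addr0.
Qed.

Lemma continuous_retr : continuous retr.
Proof.
have cx : continuous (fun q : pt3 => clamp (-1) 0 q.1.1).
  by apply: continuous_clamp; [exact: cst_continuous|exact: cst_continuous|exact: continuous_coord1].
have cy : continuous (fun q : pt3 => clamp (-1) (clamp (-1) 0 q.1.1) q.1.2).
  by apply: continuous_clamp => //; [exact: cst_continuous|exact: continuous_coord2].
have cz : continuous (fun q : pt3 => clamp (clamp (-1) 0 q.1.1) 0 q.2).
  by apply: continuous_clamp => //; [exact: cst_continuous|exact: continuous_coord3].
have cm : continuous (fun q : pt3 =>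
    Num.min (clamp (-1) 0 q.1.1 - clamp (-1) (clamp (-1) 0 q.1.1) q.1.2)
            (- clamp (clamp (-1) 0 q.1.1) 0 q.2)).
  by apply: continuous_minr; [apply: continuous_add => //|]; apply: continuous_opp.
by apply: continuous_mkpt => //; apply: continuous_add.
Qed.

Definition toY q : @Ysp R := exist _ (retr q) (mem_set (proj2 (YsetE _) (retr_Yspec q))).

Lemma val_toY q : Yset q -> val (toY q) = q.
Proof. by move=> /YsetE; exact: retr_id. Qed.

Lemma toY_val (p : @Ysp R) : toY (val p) = p.
Proof. by apply: val_inj; rewrite val_toY //; exact: set_mem (valP p). Qed.

Lemma continuous_val : continuous (fun p : @Ysp R => val p).
Proof. by rewrite -set_valE; exact: initial_continuous. Qed.

Lemma continuous_valY {T : topologicalType} {f : pt3 -> R} {g : T -> @Ysp R} :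
  continuous f -> continuous g -> continuous (fun t => f (val (g t))).
Proof.
move=> cf cg t; apply: continuous_comp; last exact: cf.
by apply: continuous_comp; [exact: cg|exact: continuous_val].
Qed.

Lemma continuous_toY : continuous toY.
Proof.
by apply: (@continuous_comp_initial _ _ _ (@set_val _ (@Yset R))); rewrite set_valE; exact: continuous_retr.
Qed.

Lemma valP_Yspec (p : @Ysp R) : Yspec (val p).
Proof. exact/YsetE/(set_mem (valP p)). Qed.

Lemma le3_partial_order : is_partial_order (@le3 R).
Proof.
split.
- by move=> p; split.
- case=> [[x y] z] [[x' y'] z'] [/= h1 h2 h3] [/= h1' h2' h3'].
  by congr (_, _, _); apply: le_anti; apply/andP.
- by move=> p q r [? ? ?] [? ? ?]; split; lra.
Qed.

Lemma leY_partial_order : is_partial_order (@leY R).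
Proof.
have [refl anti trans] := le3_partial_order.
split; rewrite /leY.
- by move=> p; apply: refl.
- by move=> p q pq qp; apply: val_inj; apply: anti.
- by move=> p q r; apply: trans.
Qed.

Lemma closed_leY : closed [set p : @Ysp R * @Ysp R | leY p.1 p.2].
Proof.
have cfst : continuous (fun p : @Ysp R * @Ysp R => p.1) by move=> p; exact: cvg_fst.
have csnd : continuous (fun p : @Ysp R * @Ysp R => p.2) by move=> p; exact: cvg_snd.
have -> : [set p : @Ysp R * @Ysp R | leY p.1 p.2] =
   [set p | (val p.1).1.1 <= (val p.2).1.1] `&` [set p | (val p.1).1.2 <= (val p.2).1.2]
   `&` [set p | (val p.1).2 <= (val p.2).2].
  by apply/seteqP; split => p /=; [case=> ? ? ?|case=> -[? ?] ?].
apply: closedI; [apply: closedI|]; apply: closed_le_continuous.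
- exact: (continuous_valY continuous_coord1 cfst).
- exact: (continuous_valY continuous_coord1 csnd).
- exact: (continuous_valY continuous_coord2 cfst).
- exact: (continuous_valY continuous_coord2 csnd).
- exact: (continuous_valY continuous_coord3 cfst).
- exact: (continuous_valY continuous_coord3 csnd).
Qed.

Lemma Y_pots : pots (@leY R).
Proof. by split; [exact: leY_partial_order|exact: closed_leY]. Qed.

Lemma compact_Y : compact [set: @Ysp R].
Proof.
have -> : [set: @Ysp R] =
    toY @` (`[-1, 0]%classic `*` `[-1, 0]%classic `*` `[-1, 0]%classic).
  apply/seteqP; split => // p _; exists (val p); last exact: toY_val.
  have [/= *] := valP_Yspec p.
  by split; [split|]; rewrite /= in_itv /=; apply/andP; split; lra.
apply: continuous_compact; first exact/continuous_subspaceT/continuous_toY.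
by apply: compact_setX; [apply: compact_setX|]; exact: segment_compact.
Qed.

Lemma locally_compact_Y : locally_compact [set: @Ysp R].
Proof.
by move=> p _; exists setT; [exact: filterT|split; [exact: compact_Y|exact: closedT]].
Qed.

Lemma ler_lerp (r a b l : R) : 0 <= l <= 1 -> r <= a -> r <= b -> r <= a + l * (b - a).
Proof. by move=> /andP[l0 l1] ra rb; nra. Qed.

Lemma lerp_ler (r a b l : R) : 0 <= l <= 1 -> a <= r -> b <= r -> a + l * (b - a) <= r.
Proof. by move=> /andP[l0 l1] ar br; nra. Qed.

Definition seg p q l : pt3 :=
  mkpt (p.1.1 + l * (q.1.1 - p.1.1)) (p.1.2 + l * (q.1.2 - p.1.2)) (p.2 + l * (q.2 - p.2)).

Lemma seg0 p q : seg p q 0 = p.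
Proof. by case: p => [[x y] z]; rewrite /seg /mkpt /=; congr (_, _, _); ring. Qed.

Lemma seg1 p q : seg p q 1 = q.
Proof. by case: p q => [[x y] z] [[x' y'] z']; rewrite /seg /mkpt /=; congr (_, _, _); ring. Qed.

Lemma continuous_seg p q : continuous (seg p q).
Proof.
have ci : continuous (fun l : R => l) by move=> l; exact: cvg_id.
have cc (a b : R) : continuous (fun l : R => a + l * (b - a)).
  by apply: continuous_add; [exact: cst_continuous|apply: continuous_mul => //; exact: cst_continuous].
exact: continuous_mkpt.
Qed.

Lemma triangle_seg u v w p q l : 0 <= l <= 1 ->
  triangle u v w p -> triangle u v w q -> triangle u v w (seg p q l).
Proof.
move=> /andP[l0 l1] [a [b [c [a0 b0 c0 abc ->]]]] [a' [b' [c' [a0' b0' c0' abc' ->]]]].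
exists (a + l * (a' - a)), (b + l * (b' - b)), (c + l * (c' - c)).
by split; [nra|nra|nra|nra|]; rewrite /seg /mkpt /=; congr (_, _, _); ring.
Qed.

Lemma le3_seg_l r p q l : 0 <= l <= 1 -> le3 r p -> le3 r q -> le3 r (seg p q l).
Proof. by move=> hl [? ? ?] [? ? ?]; split; apply: ler_lerp. Qed.

Lemma le3_seg_r r p q l : 0 <= l <= 1 -> le3 p r -> le3 q r -> le3 (seg p q l) r.
Proof. by move=> hl [? ? ?] [? ? ?]; split; apply: lerp_ler. Qed.

Lemma connected_star (S : set (@Ysp R)) (c : @Ysp R) : S c ->
  (forall s, S s -> forall l, 0 <= l <= 1 -> S (toY (seg (val c) (val s) l))) ->
  connected S.
Proof.
move=> Sc starS.
pose A (s : @Ysp R) := (fun l => toY (seg (val c) (val s) l)) @` `[0, 1]%classic.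
have -> : S = \bigcup_(s in S) A s.
  apply/seteqP; split => [s Ss|_ [s Ss [l l01 <-]]]; last first.
    by apply: starS; rewrite // in_itv in l01.
  by exists s => //; exists 1; [rewrite /= in_itv /= ler01 lexx|rewrite seg1 toY_val].
apply: bigcup_connected.
  by exists c => s _; exists 0; [rewrite /= in_itv /= ler01 lexx|rewrite seg0 toY_val].
move=> s _; apply: connected_continuous_connected; first exact: segment_connected.
by apply: continuous_subspaceT => l; apply: continuous_comp; [exact: continuous_seg|exact: continuous_toY].
Qed.

Definition itvY (x y : @Ysp R) := po_up (@leY R) x `&` po_down (@leY R) y.

Lemma itvY_toY (x y : @Ysp R) q : Yset q ->
  le3 (val x) q -> le3 q (val y) -> itvY x y (toY q).
Proof. by move=> Yq xq qy; split; rewrite /po_up /po_down /leY /mkset val_toY. Qed.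

Lemma connected_itvY_triangle (x y : @Ysp R) u v w :
  triangle u v w `<=` Yset ->
  connected (itvY x y `&` [set p | triangle u v w (val p)]).
Proof.
move=> sub; set S := _ `&` _.
have [->|/set0P [c [[xc cy] Tc]]] := eqVneq S set0; first exact: connected0.
apply: (@connected_star _ c) => // s [[xs sy] Ts] l hl.
have Tl : triangle u v w (seg (val c) (val s) l) by apply: triangle_seg.
split; last by rewrite /mkset val_toY //; exact: sub.
by apply: itvY_toY; [exact: sub|apply: le3_seg_l|apply: le3_seg_r].
Qed.

Lemma Y_order_connected : order_connected (@leY R).
Proof.
move=> x y _.
pose S i := itvY x y `&` [set p | (if i then T1 else T2) (val p)].
have -> : po_up (@leY R) x `&` po_down (@leY R) y = S true `|` S false.
  apply/seteqP; split => p; last by case=> -[].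
  by move=> Sp; case: (set_mem (valP p)) => h; [left|right].
have cS i : connected (S i) by case: i; apply: connected_itvY_triangle => p h; [left|right].
have [->|/set0P [p [[xp py] /T2E [p12 p1 p2 p3]]]] := eqVneq (S false) set0.
  by rewrite setU0.
have [->|/set0P [q [[_ qy] /T1E [q3 _ _ _]]]] := eqVneq (S true) set0.
  by rewrite set0U.
apply: connectedU => //.
set c := mkpt (val p).1.1 (val p).1.2 0.
have Tc1 : T1 c by apply/T1E; split => //=; [rewrite -p12|rewrite p12|exact: le_trans p2 p3].
have Tc2 : T2 c by apply/T2E; split => //=; exact: le_trans p2 p3.
have Ic : itvY x y (toY c).
  apply: itvY_toY; first by left.
    by case: xp => xp1 xp2 xp3; split => //=; exact: le_trans xp3 p3.
  by case: py => py1 py2 _; case: qy => _ _ qy3; split => //=; rewrite -q3.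
by exists (toY c); split; split; rewrite // /mkset val_toY //; left.
Qed.

Lemma Y_join (p q : @Ysp R) : exists s, po_sup (@leY R) p q s.
Proof.
have := valP_Yspec q; have := valP_Yspec p; rewrite /po_sup /leY.
case: (val p) => [[x y] z]; case: (val q) => [[x' y'] z'].
move=> [/= y1 yx xz z0 zxy] [/= y1' yx' xz' z0' zxy'].
set s := mkpt (Num.max x x') (Num.max y y') (Num.max z z').
have Ys : Yspec s.
  split => /=; first by rewrite le_max y1.
  - exact: le_max2.
  - exact: le_max2.
  - by rewrite ge_max z0 z0'.
  case: (ltrP (Num.max z z') 0) => [|zz]; last by left; apply: le_anti; rewrite zz ge_max z0 z0'.
  rewrite gt_max => /andP[zn zn'].
  have [xy xy'] : x = y /\ x' = y' by case: zxy zxy'; lra.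
  by right; rewrite xy xy'.
exists (toY s); rewrite val_toY; last exact/YsetE.
split.
- by split; rewrite /= le_max lexx.
- by split; rewrite /= le_max lexx orbT.
- by move=> w [/= ? ? ?] [/= ? ? ?]; split; rewrite /= ge_max; apply/andP.
Qed.

Lemma Y_meet (p q : @Ysp R) : exists m, po_inf (@leY R) p q m.
Proof.
have := valP_Yspec q; have := valP_Yspec p; rewrite /po_inf /leY.
case: (val p) => [[x y] z]; case: (val q) => [[x' y'] z'].
move=> [/= y1 yx xz z0 zxy] [/= y1' yx' xz' z0' zxy'].
case: (ltrP (Num.min z z') 0) => zz.
- (* every common lower bound then has z < 0, hence lies on the diagonal x = y *)
  set m := mkpt (Num.min y y') (Num.min y y') (Num.min z z').
  have Ym : Yspec m.
    split => /=; [by rewrite le_min y1|done|apply: le_min2; lra|exact: ltW|by right].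
  exists (toY m); rewrite val_toY; last exact/YsetE.
  split.
  - by split; rewrite /= ge_min ?lexx //; apply/orP; left; lra.
  - by split; rewrite /= ge_min ?lexx ?orbT //; apply/orP; right; lra.
  - case=> [[[a b] c] /set_mem/YsetE [/= _ _ _ _ [c0|ab]]] [/= ? ? cz] [/= ? ? cz'].
      have : 0 <= Num.min z z' by rewrite le_min -c0 cz cz'.
      lra.
    by split; rewrite /= ?le_min; try apply/andP; lra.
- have z00 : z = 0 by move: zz; rewrite le_min => /andP[]; lra.
  have z00' : z' = 0 by move: zz; rewrite le_min => /andP[]; lra.
  set m := mkpt (Num.min x x') (Num.min y y') 0.
  have Ym : Yspec m.
    split => /=; [by rewrite le_min y1|exact: le_min2|by rewrite ge_min -z00 xz|done|by left].
  exists (toY m); rewrite val_toY; last exact/YsetE.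
  split.
  - by split; rewrite /= ?ge_min ?lexx // z00.
  - by split; rewrite /= ?ge_min ?lexx ?orbT // z00'.
  - by move=> w [/= ? ? ?] [/= ? ? ?]; split; rewrite /= ?le_min; try apply/andP; lra.
Qed.

Lemma Y_lattice : is_lattice (@leY R).
Proof. by move=> p q; split; [exact: Y_meet|exact: Y_join]. Qed.
End Y.

Lemma fell_open_hit {X : topologicalType} (O : set X) : open O ->
  @open (fell X) [set A : fell X | A `&` O !=set0].
Proof.
move=> oO; exists [set [set A : fell X | A `&` O !=set0]]; last by rewrite bigcup_set1.
move=> _ ->; exists (fset1 ((O, true) : @fell_index X)).
  by move=> i /=; rewrite inE => /eqP ->; apply/mem_set.
by rewrite set_fset1 bigcap_set1.
Qed.

Section Discontinuity.
Context {R : realType} {o a : @Ysp R}.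
Hypotheses (ho : val o = mkpt 0 0 0) (ha : val a = mkpt 0 (-1) 0).

Definition diag_path (t : R) : @Ysp R := toY (mkpt (- t) (- t) (- t)).

Lemma val_diag_path t : 0 <= t <= 1 -> val (diag_path t) = mkpt (- t) (- t) (- t).
Proof. by move=> /andP[t0 t1]; apply: val_toY; right; apply/T2E; split => /=; lra. Qed.

Lemma continuous_diag_path : continuous diag_path.
Proof.
have cn : continuous (fun t : R => - t) by apply: continuous_opp => t; exact: cvg_id.
by move=> t; apply: continuous_comp; [exact: continuous_mkpt|exact: continuous_toY].
Qed.

Lemma nbhs_origin_lowered (V : set (@Ysp R)) : nbhs o V -> exists y, V y /\ (val y).2 < 0.
Proof.
have o0 : diag_path 0 = o by apply: val_inj; rewrite ho val_diag_path ?lexx ?ler01 // oppr0.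
move=> Vo; have /nbhs0_pos_witness [t [t01 Vt]] : nbhs 0 (diag_path @^-1` V).
  by apply: continuous_diag_path; rewrite o0.
exists (diag_path t); split => //; rewrite val_diag_path /=; first lra.
by case/andP: t01 => /ltW -> ->.
Qed.

Definition offdiag : set (@Ysp R) := [set p | (val p).1.2 < (val p).1.1].

Lemma open_offdiag : open offdiag.
Proof.
have cid : continuous (fun p : @Ysp R => p) by move=> p; exact: cvg_id.
apply: open_lt_continuous.
  exact: (continuous_valY continuous_coord2 cid).
exact: (continuous_valY continuous_coord1 cid).
Qed.

Lemma offdiag_a : offdiag a.
Proof. by rewrite /offdiag /mkset ha /=; lra. Qed.

Lemma leY_a_o : leY a o.
Proof. by rewrite /leY ha ho; split => /=; lra. Qed.

Lemma not_offdiag_below {q y : @Ysp R} : (val y).2 < 0 -> leY q y -> ~ offdiag q.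
Proof.
move=> y0 [_ _ qy]; rewrite /offdiag /mkset.
by have [_ _ _ _ [|->]] := valP_Yspec q; lra.
Qed.

Lemma meet_discontinuous (m : @Ysp R -> @Ysp R -> @Ysp R) :
  (forall x y, po_inf (@leY R) x y (m x y)) ->
  ~ {for (o, a), continuous (fun p : @Ysp R * @Ysp R => m p.1 p.2)}.
Proof.
move=> minf mc; have [refl anti _] := leY_partial_order (R := R).
have moa : m o a = a.
  by have [ma ma' mg] := minf o a; apply: anti => //; apply: mg => //; exact: leY_a_o.
have Nm : nbhs (o, a) ((fun p : @Ysp R * @Ysp R => m p.1 p.2) @^-1` offdiag).
  by apply: mc; rewrite /= moa; apply: open_nbhs_nbhs; split; [exact: open_offdiag|exact: offdiag_a].
have /nbhs_origin_lowered [y [Wy y0]] : nbhs o [set y | offdiag (m y a)].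
  have ca : {for o, continuous (fun y : @Ysp R => (y, a))}.
    by apply: (cvg_pair cvg_id (cvg_cst a)); exact: nbhs_filter.
  exact: (ca _ Nm).
by have [my _ _] := minf y a; exact: not_offdiag_below y0 my Wy.
Qed.

Lemma down_discontinuous :
  ~ {for o, continuous (fun y : @Ysp R => (po_down (@leY R) y : fell (@Ysp R)))}.
Proof.
move=> dc; have /nbhs_origin_lowered [y [[q [qy Wq]] y0]] :
    nbhs o [set y | po_down (@leY R) y `&` offdiag !=set0].
  apply: (dc [set A : fell (@Ysp R) | A `&` offdiag !=set0]); apply: open_nbhs_nbhs; split.
    exact: fell_open_hit open_offdiag.
  by exists a; split; [exact: leY_a_o|exact: offdiag_a].
exact: not_offdiag_below y0 qy Wq.
Qed.
End Discontinuity.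

Theorem mainTheorem8 (R : realType) (o a : @Ysp R)
  (ho : val o = mkpt 0 0 0) (ha : val a = mkpt 0 (-1) 0) :
  (* (i) *)
  [/\ locally_compact [set: @Ysp R], pots (@leY R), order_connected (@leY R)
    & is_lattice (@leY R)] /\
  (* (ii) *)
  (forall m : Ysp -> Ysp -> Ysp, (forall x y, po_inf (@leY R) x y (m x y)) ->
     ~ {for (o, a), continuous (fun p : Ysp * Ysp => m p.1 p.2)}) /\
  ~ top_meet_semilattice (@leY R) /\
  (* (iii) *)
  ~ {for o, continuous (fun y : Ysp => (po_down (@leY R) y : fell (@Ysp R)))}.
Proof.
have meet_dc := meet_discontinuous ho ha.
split; first by split; [exact: locally_compact_Y|exact: Y_pots|exact: Y_order_connected|exact: Y_lattice].
split; first exact: meet_dc.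
split; last exact: down_discontinuous ho ha.
by case=> _ [m [minf mc]]; exact: (meet_dc m minf (mc (o, a))).
Qed.
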